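(* Let $q$, $\phi,\theta$ and $U_1=(P_1,Q_1,R_1)^T$ be as in the context and $\lambda\in(0,\infty)$. Then (i) $4P_1(x,\lambda)R_1(x,\lambda)-Q_1(x,\lambda)^2=4$ for all $x>0$; (ii) if $U_1=a^*((\theta')^2,-2\theta\theta',\theta^2)^T+b^*(\theta'\phi',-(\theta\phi'+\theta'\phi),\theta\phi)^T+c^*((\phi')^2,-2\phi\phi',\phi^2)^T$ with real $a^*,b^*,c^*$, then $4a^*c^*-(b^* )^2=4$.
   Context: $-y''+qy=\lambda y$ on $(0,\infty)$, $q(x)=\frac{q_0}{x^2}+\frac{q_1}{x}+\sum_{n\ge0}q_{n+2}x^n$ with real coefficients, series convergent on $(0,\infty)$, $q_0\ge-\tfrac14$, $q_0,q_1$ not both zero, $q(x)\to0$ as $x\to\infty$, and for some $x_0>0$ either $q\in L_1(x_0,\infty)$ or ($q'\in L_1(x_0,\infty)$, $q\in AC_{loc}[x_0,\infty)$). $\phi,\theta$ are the Frobenius solutions at $0$: with $q_0=\nu^2-\tfrac14$, $\nu\ge0$, $\phi=y_1$ is the Frobenius solution $x^{r}(1+\sum_{n\ge1}a_n(\lambda)x^n)$ for the larger indicial root $r=\tfrac12+\nu$, $y_2$ is a second (possibly logarithmic) Frobenius solution with leading coefficient $1$ and coefficients real polynomials in $\lambda$ (as given by the Frobenius method), $C=W(y_1,y_2)$ is the nonzero real constant Wronskian ($-2\nu$, $-(2\ell+1)$ when $q_0=\ell(\ell+1)$, $-2N$ when $q_0=N^2-\frac14$, $N\ge1$, or $1$ when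 $q_0=-\frac14$), and $\theta=y_2/C$, so $W(\phi,\theta)=\phi\theta'-\phi'\theta=1$. Appell system: $(P,Q,R)'=M(P,Q,R)^T$ with $M=\begin{pmatrix}0&\lambda-q&0\\-2&0&2(\lambda-q)\\0&-1&0\end{pmatrix}$; $U_1$ is its unique solution with $\lim_{x\to\infty}U_1=(\sqrt\lambda,0,1/\sqrt\lambda)^T$. *)

From Stdlib Require Import Reals.
From Coquelicot Require Import Coquelicot.
Open Scope R_scope.

Definition qpot (qc : nat -> R) (x : R) : R :=
  qc 0%nat / x ^ 2 + qc 1%nat / x + PSeries (fun n => qc (S (S n))) x.

(* nu >= 0 with q0 = nu^2 - 1/4 (requires q0 >= -1/4). *)
Definition nu_of (qc : nat -> R) : R := sqrt (qc 0%nat + / 4).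

Definition solves (q : R -> R) (lam : R) (y : R -> R) : Prop :=
  forall x, 0 < x ->
    ex_derive y x /\ ex_derive (Derive y) x /\
    - Derive (Derive y) x + q x * y x = lam * y x.

Definition wronskian (f g : R -> R) (x : R) : R :=
  f x * Derive g x - Derive f x * g x.

(* y1 is the Frobenius solution at 0 for the larger indicial root
   r = 1/2 + nu : y1(x) = x^r (1 + sum_{n>=1} a_n x^n), series convergent on (0,oo). *)
Definition frobenius_first (q : R -> R) (lam nu : R) (y1 : R -> R) : Prop :=
  solves q lam y1 /\
  exists a : nat -> R, a 0%nat = 1 /\
    (forall x, 0 < x -> ex_pseries a x) /\
    (forall x, 0 < x -> y1 x = Rpower x (/ 2 + nu) * PSeries a x).

(* y2 is a second (possibly logarithmic) Frobenius solution with leading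
   coefficient 1:
     y2(x) = kappa * y1(x) * ln x + x^(1/2 - nu) * sum_{n>=0} b_n x^n,
   with b_0 = 1 when nu > 0 (leading term x^(1/2-nu)), and, when nu = 0,
   kappa = 1, b_0 = 0 (leading term x^(1/2) ln x). *)
Definition frobenius_second (q : R -> R) (lam nu : R) (y1 y2 : R -> R) : Prop :=
  solves q lam y2 /\
  exists (kappa : R) (b : nat -> R),
    (forall x, 0 < x -> ex_pseries b x) /\
    (forall x, 0 < x ->
       y2 x = kappa * y1 x * ln x + Rpower x (/ 2 - nu) * PSeries b x) /\
    (0 < nu -> b 0%nat = 1) /\
    (nu = 0 -> kappa = 1 /\ b 0%nat = 0).

From Stdlib Require Import Reals Lra.
From Coquelicot Require Import Coquelicot.
Open Scope R_scope.

(* The quantity [4 P R - Q^2] is a first integral of the Appell system, and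
   its limit at infinity is [4 sqrt lam / sqrt lam = 4]; this gives (i).
   For (ii), the discriminant of a binary quadratic form is multiplied by the
   square of the determinant under a linear change of variables: expanding
   [4 P R - Q^2] in the given basis yields [(4 a c - b^2) W(phi, theta)^2].
   The normalisation of [theta] gives [W(phi, theta)(1) = W / W] with
   [W = W(phi, y2)(1)]; this is [1] unless [W = 0] (where division returns
   [0]), a case excluded because the expression equals [4]. *)

Lemma is_derive_appell_invariant (g P Q Rr : R -> R) (x : R) :
  is_derive P x (g x * Q x) ->
  is_derive Q x (-2 * P x + 2 * g x * Rr x) ->
  is_derive Rr x (- Q x) ->
  is_derive (fun y => 4 * P y * Rr y - Q y ^ 2) x 0.
Proof.
  intros HP HQ HR.
  evar (d : R).
  assert (Hd : is_derive (fun y => 4 * P y * Rr y - Q y ^ 2) x d).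
  { apply (is_derive_minus (fun y => 4 * P y * Rr y) (fun y => Q y ^ 2)).
    - apply (is_derive_mult (fun y => 4 * P y) Rr); [| exact HR |].
      + apply (is_derive_scal P x 4), HP.
      + intros; unfold mult; simpl; ring.
    - apply (is_derive_pow Q 2 x), HQ. }
  subst d. replace 0 with (4 * (g x * Q x) * Rr x + 4 * P x * (- Q x)
    - (INR 2 * (-2 * P x + 2 * g x * Rr x) * Q x ^ 1)) by (simpl; ring).
  exact Hd.
Qed.

Lemma derive_zero_const_pos (f : R -> R) :
  (forall x, 0 < x -> is_derive f x 0) ->
  forall x y, 0 < x -> 0 < y -> f x = f y.
Proof.
  intros Hf x y Hx Hy.
  destruct (MVT_gen f x y (fun _ => 0)) as [c [_ Hc]].
  - intros z [Hz _]. apply Hf.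
    eapply Rle_lt_trans; [| exact Hz]. apply Rmin_case; lra.
  - intros z [Hz _]. apply derivable_continuous_pt, ex_derive_Reals_0.
    exists 0. apply Hf.
    eapply Rlt_le_trans; [| exact Hz]. apply Rmin_case; lra.
  - lra.
Qed.

Lemma const_pos_is_lim (f : R -> R) (l : R) :
  (forall x y, 0 < x -> 0 < y -> f x = f y) ->
  is_lim f p_infty l -> forall x, 0 < x -> f x = l.
Proof.
  intros Hf Hl x Hx.
  assert (Hx' : is_lim f p_infty (f x)).
  { apply (is_lim_ext_loc (fun _ => f x)); [| apply is_lim_const].
    exists 0. intros y Hy. apply Hf; lra. }
  apply is_lim_unique in Hx', Hl.
  rewrite Hl in Hx'. now injection Hx'.
Qed.

Lemma appell_invariant_lim (lam : R) (P Q Rr : R -> R) :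
  0 < lam ->
  is_lim P p_infty (sqrt lam) -> is_lim Q p_infty 0 ->
  is_lim Rr p_infty (/ sqrt lam) ->
  is_lim (fun y => 4 * P y * Rr y - Q y ^ 2) p_infty 4.
Proof.
  intros Hlam HP HQ HR.
  assert (Hsq : sqrt lam <> 0) by (apply Rgt_not_eq, sqrt_lt_R0; lra).
  pose proof (is_lim_minus _ _ p_infty _ _ _
    (is_lim_mult _ _ p_infty _ _
       (is_lim_mult _ _ p_infty _ _ (is_lim_const 4 p_infty) HP I) HR I)
    (is_lim_mult _ _ p_infty _ _ HQ HQ I) eq_refl) as H.
  simpl in H.
  replace (4 * sqrt lam * / sqrt lam + - (0 * 0)) with 4 in H by (field; auto).
  eapply is_lim_ext; [| exact H]. intros y; simpl; ring.
Qed.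

Lemma quadratic_form_discriminant (a b c u du v dv : R) :
  let P := a * du ^ 2 + b * (du * dv) + c * dv ^ 2 in
  let Q := a * (-2 * u * du) + b * (- (u * dv + du * v)) + c * (-2 * v * dv) in
  let Rr := a * u ^ 2 + b * (u * v) + c * v ^ 2 in
  4 * P * Rr - Q ^ 2 = (4 * a * c - b ^ 2) * (v * du - dv * u) ^ 2.
Proof. simpl; ring. Qed.

Lemma Derive_ext_pos (f g : R -> R) (x : R) :
  (forall y, 0 < y -> f y = g y) -> 0 < x -> Derive f x = Derive g x.
Proof.
  intros Hfg Hx. apply Derive_ext_loc.
  exists (mkposreal x Hx). intros y Hy. apply Hfg.
  unfold ball in Hy; simpl in Hy;
    unfold AbsRing_ball, abs, minus, plus, opp in Hy; simpl in Hy.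
  apply Rabs_def2 in Hy. lra.
Qed.

Lemma wronskian_div_r (f g h : R -> R) (k x : R) :
  (forall y, 0 < y -> h y = g y / k) -> 0 < x ->
  wronskian f h x = wronskian f g x / k.
Proof.
  intros Hh Hx.
  assert (Hdh : Derive h x = / k * Derive g x).
  { rewrite <- Derive_scal. apply Derive_ext_pos; [| exact Hx].
    intros y Hy. rewrite Hh by exact Hy. unfold Rdiv; ring. }
  unfold wronskian. rewrite Hdh, Hh by exact Hx. unfold Rdiv; ring.
Qed.

Theorem mainTheorem8
  (qc : nat -> R) (lam : R) (phi theta P Q Rr : R -> R)
  (* q : real coefficients, series convergent on (0,oo) *)
  (Hconv : forall x, 0 < x -> ex_pseries (fun n => qc (S (S n))) x)
  (Hq0 : - / 4 <= qc 0%nat)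
  (Hq01 : qc 0%nat <> 0 \/ qc 1%nat <> 0)
  (Hlim : is_lim (qpot qc) p_infty 0)
  (Hint : exists x0, 0 < x0 /\
     (ex_RInt_gen (fun x => Rabs (qpot qc x)) (at_point x0) (Rbar_locally p_infty)
      \/ ex_RInt_gen (fun x => Rabs (Derive (qpot qc) x)) (at_point x0)
                      (Rbar_locally p_infty)))
  (* lambda > 0 *)
  (Hlam : 0 < lam)
  (* phi, theta : the Frobenius solutions at 0 *)
  (Hphi : frobenius_first (qpot qc) lam (nu_of qc) phi)
  (Htheta : exists y2, frobenius_second (qpot qc) lam (nu_of qc) phi y2 /\
     forall x, 0 < x -> theta x = y2 x / wronskian phi y2 1)
  (* U1 = (P, Q, Rr) : the solution of the Appell system on (0,oo) *)
  (HP : forall x, 0 < x -> is_derive P x ((lam - qpot qc x) * Q x))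
  (HQ : forall x, 0 < x ->
     is_derive Q x (-2 * P x + 2 * (lam - qpot qc x) * Rr x))
  (HR : forall x, 0 < x -> is_derive Rr x (- Q x))
  (* with lim_{x->oo} U1 = (sqrt lam, 0, 1/sqrt lam) *)
  (HPl : is_lim P p_infty (sqrt lam))
  (HQl : is_lim Q p_infty 0)
  (HRl : is_lim Rr p_infty (/ sqrt lam)) :
  (forall x, 0 < x -> 4 * P x * Rr x - (Q x) ^ 2 = 4) /\
  (forall a b c : R,
     (forall x, 0 < x ->
        P x = a * (Derive theta x) ^ 2 + b * (Derive theta x * Derive phi x)
              + c * (Derive phi x) ^ 2 /\
        Q x = a * (-2 * theta x * Derive theta x)
              + b * (- (theta x * Derive phi x + Derive theta x * phi x))
              + c * (-2 * phi x * Derive phi x) /\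
        Rr x = a * (theta x) ^ 2 + b * (theta x * phi x) + c * (phi x) ^ 2) ->
     4 * a * c - b ^ 2 = 4).
Proof.
  assert (Hinv : forall x, 0 < x -> 4 * P x * Rr x - Q x ^ 2 = 4).
  { apply const_pos_is_lim; [| exact (appell_invariant_lim lam P Q Rr Hlam HPl HQl HRl)].
    apply derive_zero_const_pos. intros x Hx.
    apply (is_derive_appell_invariant (fun y => lam - qpot qc y)); auto. }
  split; [exact Hinv |].
  intros a b c Hrep.
  destruct Htheta as [y2 [_ Hth]].
  destruct (Hrep 1 Rlt_0_1) as [E1 [E2 E3]].
  pose proof (Hinv 1 Rlt_0_1) as H4.
  rewrite E1, E2, E3, quadratic_form_discriminant in H4.
  change (phi 1 * Derive theta 1 - Derive phi 1 * theta 1) with (wronskian phi theta 1) in H4.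
  rewrite (wronskian_div_r phi y2 theta _ 1 Hth Rlt_0_1) in H4.
  destruct (Req_dec (wronskian phi y2 1) 0) as [HW | HW].
  - rewrite HW in H4. unfold Rdiv in H4. rewrite Rmult_0_l in H4. lra.
  - unfold Rdiv in H4. rewrite Rinv_r in H4 by exact HW. lra.
Qed.
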